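(* Let $\mathcal T$ be a locally finite partial tessellation of ${\mathbb X}$. Every side of $\mathcal T$ is contained in exactly two tiles of $\mathcal T$, and it is equal to the intersection of these two tiles.
   Context: ${\mathbb X}$ is $\mathbb R^n$, the unit sphere $\mathbb S^n$, or hyperbolic $n$-space. A subspace is a complete totally geodesic submanifold; a hyperplane is a subspace of codimension 1; closed half-spaces are the closures of the two components of the complement of a hyperplane. A polyhedron is a nonempty intersection of a family of closed half-spaces whose boundary hyperplanes form a locally finite family; its codimension is the codimension of the smallest subspace containing it, and its relative interior $C^r$ is its interior in that subspace. It is thick if it has nonempty interior in ${\mathbb X}$. A partial tessellation is a set of thick polyhedra (tiles) with pairwise disjoint interiors; locally finite means every compact set meets only finitely many tiles. A cell of $\mathcal T$ is a nonempty intersection $C$ of tiles such that for every tile $T$ either $C\subseteq T$ or $C^r\cap T=\emptyset$; a side is a cell of codimension 1. *)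

From HB Require Import structures.
From mathcomp Require Import all_boot all_order all_algebra.
From mathcomp Require Import all_classical all_reals all_analysis.

Set Implicit Arguments.
Unset Strict Implicit.
Unset Printing Implicit Defensive.

Import Order.TTheory GRing.Theory Num.Theory.
Import numFieldNormedType.Exports.
Local Open Scope classical_set_scope.
Local Open Scope ring_scope.

(* The three model geometries, all realised inside R^(n+1) = 'rV[R]_(n.+1):
   - Euclidean n-space: the affine hyperplane  x_0 = 1;
   - the unit sphere S^n: { x | x.x = 1 };
   - hyperbolic n-space: upper sheet of the hyperboloid
       -x_0^2 + x_1^2 + ... + x_n^2 = -1,  x_0 > 0.
   In each model the subspaces (complete totally geodesic submanifolds)
   are exactly the nonempty sets  X \cap U  with U a linear subspace of
   R^(n+1), and the topology of X is the one induced by R^(n+1). *)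
Inductive geometry := Euclidean | Spherical | Hyperbolic.

Section Geometry.
Variable R : realType.
Variable g : geometry.
Variable n : nat.

Notation V := 'rV[R]_(n.+1).

Definition dotv (a x : V) : R := \sum_(i < n.+1) a ord0 i * x ord0 i.

Definition model : set V :=
  match g with
  | Euclidean => [set x | x ord0 ord0 = 1]
  | Spherical => [set x | dotv x x = 1]
  | Hyperbolic => [set x | dotv x x - 2 * (x ord0 ord0) ^+ 2 = -1 /\
                           0 < x ord0 ord0]
  end.

(* subspaces of X; the dimension of model `&` U is \dim U - 1 *)
Definition subspace (S : set V) : Prop :=
  exists U : {vspace V}, S = model `&` [set x | x \in U] /\ S !=set0.

Definition hyperplane (S : set V) : Prop :=
  exists U : {vspace V}, S = model `&` [set x | x \in U] /\ S !=set0 /\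
    \dim U = n.

(* the hyperplane  X \cap {a.x = 0}  and the closed half-space X \cap {a.x >= 0}
   (closure of the component X \cap {a.x > 0} of X minus the hyperplane) *)
Definition bnd (a : V) : set V := model `&` [set x | dotv a x = 0].
Definition halfsp (a : V) : set V := model `&` [set x | 0 <= dotv a x].

Definition cpt (K : set V) : Prop := K `<=` model /\ compact K.

Definition polyhedron (P : set V) : Prop :=
  exists A : set V,
    (forall a, A a -> a != 0 /\ hyperplane (bnd a)) /\
    (forall K, cpt K ->
       finite_set [set H : set V | exists a, A a /\ H = bnd a /\
                                             H `&` K !=set0]) /\
    P = model `&` [set x | forall a, A a -> 0 <= dotv a x] /\
    P !=set0.

Definition intX (A : set V) : set V :=
  [set x | A x /\ exists e : R, 0 < e /\
     forall y, model y -> dotv (y - x) (y - x) < e * e -> A y].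

Definition thick (P : set V) : Prop := intX P !=set0.

(* U is the smallest linear subspace containing C; then model `&` U is
   the smallest subspace of X containing C (for nonempty C in X) *)
Definition is_hull (C : set V) (U : {vspace V}) : Prop :=
  (forall x, C x -> x \in U) /\
  (forall U' : {vspace V}, (forall x, C x -> x \in U') -> (U <= U')%VS).

Definition codim_is (C : set V) (k : nat) : Prop :=
  exists U, is_hull C U /\ k = (n.+1 - \dim U)%N.

Definition relint (C : set V) : set V :=
  [set x | exists U, is_hull C U /\ C x /\ exists e : R, 0 < e /\
     forall y, model y -> y \in U -> dotv (y - x) (y - x) < e * e -> C y].

Definition partial_tessellation (T : set (set V)) : Prop :=
  (forall P, T P -> polyhedron P /\ thick P) /\
  (forall P Q, T P -> T Q -> P <> Q -> intX P `&` intX Q = set0).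

Definition locally_finite (T : set (set V)) : Prop :=
  forall K, cpt K -> finite_set [set P | T P /\ P `&` K !=set0].

Definition cell (T : set (set V)) (C : set V) : Prop :=
  (exists F : set (set V), F `<=` T /\ F !=set0 /\
     C = [set x | forall P, F P -> P x]) /\
  C !=set0 /\
  (forall P, T P -> C `<=` P \/ relint C `&` P = set0).

Definition side (T : set (set V)) (C : set V) : Prop :=
  cell T C /\ codim_is C 1.

End Geometry.

From HB Require Import structures.
From mathcomp Require Import all_boot all_order all_algebra.
From mathcomp Require Import all_classical all_reals all_analysis.
From mathcomp Require Import ring lra.
Import Order.TTheory GRing.Theory Num.Theory.
Import numFieldNormedType.Exports.
Local Open Scope classical_set_scope.
Local Open Scope ring_scope.
Set Implicit Arguments.
Unset Strict Implicit.
Unset Printing Implicit Defensive.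

(* Let S span the linear hyperplane U of R^(n+1).  A tile P = X \cap {a.x >= 0 : a in A}
   contains the convex cone spanned by S and any of its points q, and a point of
   X in the interior of that cone lies in the interior of P.  Every tile is thick,
   hence has a point off U.  If two tiles containing S had points q1, q2 strictly
   on the same side of U, then for a basis x_1, ..., x_n of U taken in S some
   positive combination e q1 + sum x_k is also a positive combination of q2 and
   the x_k, so the two tiles would share an interior point.  Hence at most two
   tiles contain S.  On the other hand S is an intersection of tiles and is not
   itself a tile (it lies in U), so at least two tiles contain S, and S is their
   intersection. *)

Section DotProduct.
Variables (R : realType) (n : nat).
Local Notation V := 'rV[R]_n.+1.
Implicit Types (a x y : V).

Lemma dotvC x y : dotv x y = dotv y x.
Proof. by rewrite /dotv; apply: eq_bigr => i _; rewrite mulrC. Qed.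

Lemma dotvDr a x y : dotv a (x + y) = dotv a x + dotv a y.
Proof. by rewrite /dotv -big_split; apply: eq_bigr => i _; rewrite mxE mulrDr. Qed.

Lemma dotvZr a x c : dotv a (c *: x) = c * dotv a x.
Proof. by rewrite /dotv mulr_sumr; apply: eq_bigr => i _; rewrite mxE mulrCA. Qed.

Lemma dotvNr a x : dotv a (- x) = - dotv a x.
Proof. by rewrite -scaleN1r dotvZr mulN1r. Qed.

Lemma dotvBr a x y : dotv a (x - y) = dotv a x - dotv a y.
Proof. by rewrite dotvDr dotvNr. Qed.

Lemma dotvDl a x y : dotv (x + y) a = dotv x a + dotv y a.
Proof. by rewrite dotvC dotvDr !(dotvC a). Qed.

Lemma dotvZl a x c : dotv (c *: x) a = c * dotv x a.
Proof. by rewrite dotvC dotvZr dotvC. Qed.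

Lemma dotvBl a x y : dotv (x - y) a = dotv x a - dotv y a.
Proof. by rewrite dotvC dotvBr !(dotvC a). Qed.

Lemma dotv0r a : dotv a 0 = 0.
Proof. by rewrite -(scale0r 0) dotvZr mul0r. Qed.

Lemma dotv_ge0 x : 0 <= dotv x x.
Proof. by apply: sumr_ge0 => i _; rewrite -expr2 sqr_ge0. Qed.

Lemma dotv_coord_le x j : x ord0 j ^+ 2 <= dotv x x.
Proof.
rewrite /dotv (bigD1 j) //= -expr2 lerDl.
by apply: sumr_ge0 => i _; rewrite -expr2 sqr_ge0.
Qed.

Lemma dotv_eq0 x : dotv x x = 0 -> x = 0.
Proof.
move=> x0; apply/rowP => j; rewrite mxE; apply/eqP; rewrite -sqrf_eq0 eq_le sqr_ge0.
by rewrite -x0 dotv_coord_le.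
Qed.

Lemma dotv_comb x y (al be : R) :
  dotv (al *: x + be *: y) (al *: x + be *: y) =
  al ^+ 2 * dotv x x + 2 * (al * be) * dotv x y + be ^+ 2 * dotv y y.
Proof. rewrite !dotvDl !dotvDr !dotvZl !dotvZr (dotvC y x); ring. Qed.

Lemma coord_lt_dotv x r j : 0 < r -> dotv x x < r * r -> `|x ord0 j| < r.
Proof.
move=> r0 xr; rewrite -(@ltr_pXn2r _ 2) ?nnegrE ?normr_ge0 ?(ltW r0) //.
by rewrite real_normK ?num_real // (le_lt_trans (dotv_coord_le x j)) // expr2.
Qed.

End DotProduct.

Section LinearAlgebra.
Variables (R : realType) (n : nat).
Local Notation V := 'rV[R]_n.+1.

Lemma dim_rV : \dim (fullv : {vspace V}) = n.+1.
Proof. by rewrite dimvf /dim /= mul1n. Qed.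

Lemma free_size_le (X : seq V) : free X -> (size X <= n.+1)%N.
Proof. by move=> /eqnP <-; have := dimvS (subvf <<X>>); rewrite dim_rV. Qed.

Lemma free_tuple_span_full (B : (n.+1).-tuple V) v : free B -> v \in <<B>>%VS.
Proof.
move=> fB; suff -> : <<B>>%VS = fullv by rewrite memvf.
by apply/eqP; rewrite eqEdim subvf dim_rV (eqnP fB) size_tuple ltnSn.
Qed.

Lemma free_cons_decomp q (X : n.-tuple V) v :
  free (q :: X) -> exists d u, u \in <<X>>%VS /\ v = d *: q + u.
Proof.
move=> fqX; have := free_tuple_span_full v (fqX : free [tuple of q :: X]).
by rewrite span_cons => /memv_addP [w /vlineP [d ->] [u uX ->]]; exists d, u.
Qed.

Lemma nat_descent (P : nat -> Prop) N : P 0%N -> ~ P N -> exists k, P k /\ ~ P k.+1.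
Proof.
move=> P0; elim: N => [|N IH] PN //.
by case: (pselect (P N)) => [|/IH]; [exists N|].
Qed.

(* A maximal free sequence of elements of S spans S. *)
Lemma free_basis_in (S : set V) :
  exists X : seq V, free X /\ (forall x, x \in X -> S x) /\ (forall s, S s -> s \in <<X>>%VS).
Proof.
pose P k := exists X : seq V, size X = k /\ free X /\ (forall x, x \in X -> S x).
have P0 : P 0%N by exists [::]; rewrite nil_free.
have PN : ~ P n.+2 by move=> [X [sX [/free_size_le + _]]]; rewrite sX ltnn.
have [k [[X [sX [fX XS]]] nPk]] := nat_descent P0 PN.
exists X; split=> //; split=> // s Ss; apply/negPn/negP => sX'; apply: nPk.
exists (s :: X); split; first by rewrite /= sX.
split; first by rewrite free_cons sX' fX.
by move=> x; rewrite in_cons => /orP [/eqP ->|/XS].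
Qed.

Lemma codim1_free_tuple (S : set V) :
  codim_is S 1 ->
  exists X : n.-tuple V, free X /\ (forall k : 'I_n, S X`_k) /\
    (forall s, S s -> s \in <<X>>%VS).
Proof.
move=> [U [[SU minU] cod]].
have [X [fX [XS SX]]] := free_basis_in S.
have XU : <<X>>%VS = U.
  apply/eqP; rewrite eqEsubv minU // andbT.
  by apply/span_subvP => x /XS /SU.
have sX : size X == n.
  have := dimvS (subvf U); rewrite dim_rV -XU (eqnP fX) => /subnK.
  by rewrite -XU (eqnP fX) in cod; rewrite -cod add1n => -[->].
exists (Tuple sX); split=> //; split=> // k.
by apply: XS; rewrite mem_nth // (eqP sX).
Qed.

Definition coord_bound m (B : m.-tuple V) (i : 'I_m) : R :=
  \sum_(j < n.+1) `|coord B i (delta_mx ord0 j)|.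

Lemma coord_bound_ge0 m (B : m.-tuple V) i : 0 <= coord_bound B i.
Proof. exact: sumr_ge0. Qed.

Lemma coord_le_dotv m (B : m.-tuple V) i x r :
  0 < r -> dotv x x < r * r -> `|coord B i x| <= coord_bound B i * r.
Proof.
move=> r0 xr.
rewrite [in X in coord B i X](row_sum_delta x) linear_sum /= /coord_bound mulr_suml.
apply: (le_trans (ler_norm_sum _ _ _)); apply: ler_sum => j _.
by rewrite linearZ /= normrM mulrC ler_wpM2l // ltW // coord_lt_dotv.
Qed.

End LinearAlgebra.

Section DualCone.
Variables (R : realType) (n : nat).
Local Notation V := 'rV[R]_n.+1.

Definition dual_cone (A : set V) : set V := [set x | forall a, A a -> 0 <= dotv a x].

Lemma dual_cone0 A : dual_cone A 0.
Proof. by move=> a _; rewrite dotv0r. Qed.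

Lemma dual_coneD A x y : dual_cone A x -> dual_cone A y -> dual_cone A (x + y).
Proof. by move=> Ax Ay a Aa; rewrite dotvDr addr_ge0 // ?Ax ?Ay. Qed.

Lemma dual_coneZ A x c : 0 <= c -> dual_cone A x -> dual_cone A (c *: x).
Proof. by move=> c0 Ax a Aa; rewrite dotvZr mulr_ge0 // Ax. Qed.

(* On a ball of radius r each coordinate moves by at most [coord_bound B i * r],
   so a small ball keeps every coefficient positive. *)
Lemma dual_cone_basis_interior A (B : (n.+1).-tuple V) (c : 'I_n.+1 -> R) :
  free B -> (forall i : 'I_n.+1, dual_cone A B`_i) -> (forall i, 0 < c i) ->
  exists r, 0 < r /\ forall z,
    dotv (z - \sum_i c i *: B`_i) (z - \sum_i c i *: B`_i) < r * r -> dual_cone A z.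
Proof.
move=> fB AB c0.
set y := \sum_i c i *: B`_i.
set s := \sum_(i < n.+1) (coord_bound B i + 1) / c i.
have bc0 i : 0 < (coord_bound B i + 1) / c i.
  by rewrite divr_gt0 // ltr_wpDl ?coord_bound_ge0.
have bcs i : (coord_bound B i + 1) / c i <= s.
  by rewrite /s (bigD1 i) //= lerDl; apply: sumr_ge0 => j _; exact: ltW.
have s0 : 0 < s by apply: lt_le_trans (bcs ord0).
have r0 : 0 < s^-1 by rewrite invr_gt0.
exists s^-1; split=> // z zy.
have coef0 i : 0 <= c i + coord B i (z - y).
  have := coord_le_dotv B i r0 zy.
  have : s^-1 * (coord_bound B i + 1) <= c i.
    by rewrite mulrC ler_pdivrMr // mulrC -ler_pdivrMr.
  have := ler_norm (- coord B i (z - y)); rewrite normrN.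
  have := coord_bound_ge0 B i; nra.
have -> : z = \sum_i (c i + coord B i (z - y)) *: B`_i.
  rewrite [in LHS](_ : z = y + (z - y)); last by rewrite addrC subrK.
  rewrite [in LHS](coord_span (free_tuple_span_full (z - y) fB)) /y -big_split /=.
  by apply: eq_bigr => i _; rewrite scalerDl.
elim/big_ind: _ => [|x x' |i _]; [exact: dual_cone0|exact: dual_coneD|].
exact: dual_coneZ.
Qed.

Lemma dual_cone_cons_interior A q (X : n.-tuple V) a (f : 'I_n -> R) y :
  free (q :: X) -> dual_cone A q -> (forall k : 'I_n, dual_cone A X`_k) ->
  0 < a -> (forall k, 0 < f k) -> y = a *: q + \sum_k f k *: X`_k ->
  exists r, 0 < r /\ forall z, dotv (z - y) (z - y) < r * r -> dual_cone A z.
Proof.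
move=> fqX Aq AX a0 f0 ->.
pose c i := if unlift ord0 i is Some k then f k else a.
have AB (i : 'I_n.+1) : dual_cone A [tuple of q :: X]`_i.
  by case: (unliftP ord0 i) => [k ->|->] //; exact: AX.
have c0 i : 0 < c i by rewrite /c; case: (unlift ord0 i).
have [r [r0 hr]] := dual_cone_basis_interior (fqX : free [tuple of q :: X]) AB c0.
suff -> : a *: q + \sum_k f k *: X`_k = \sum_i c i *: [tuple of q :: X]`_i by exists r.
rewrite big_ord_recl /c unlift_none; congr (_ + _).
by apply: eq_bigr => k _; rewrite liftK lift0.
Qed.

End DualCone.

Section ModelCone.
Variables (R : realType) (n : nat).
Local Notation V := 'rV[R]_n.+1.
Implicit Types (x y : V).

(* Positive multiples of points of the model. *)
Definition model_cone (g : geometry) (y : V) : Prop :=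
  match g with
  | Euclidean => 0 < y ord0 ord0
  | Spherical => y != 0
  | Hyperbolic => dotv y y - 2 * (y ord0 ord0) ^+ 2 < 0 /\ 0 < y ord0 ord0
  end.

Lemma model_cone_model g y : model g y -> model_cone g y.
Proof.
case: g => /=; [by move=> ->| |by move=> [-> ->]; rewrite ltrN10].
by apply: contra_eq_neq => ->; rewrite dotv0r eq_sym oner_neq0.
Qed.

Lemma model_cone_normalize g y : model_cone g y -> exists c, 0 < c /\ model g (c *: y).
Proof.
case: g => /= [y0|y0|[yL y0]].
- exists (y ord0 ord0)^-1; split; first by rewrite invr_gt0.
  by rewrite mxE mulVf // gt_eqF.
- have d0 : 0 < dotv y y.
    by rewrite lt_def dotv_ge0 andbT; apply: contra_neq y0 => /dotv_eq0.
  exists (Num.sqrt (dotv y y))^-1; split; first by rewrite invr_gt0 sqrtr_gt0.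
  by rewrite dotvZr dotvZl mulrA -expr2 exprVn sqr_sqrtr ?mulVf ?gt_eqF // ltW.
- set d := - (dotv y y - 2 * y ord0 ord0 ^+ 2).
  have d0 : 0 < d by rewrite /d oppr_gt0.
  exists (Num.sqrt d)^-1; split; first by rewrite invr_gt0 sqrtr_gt0.
  have hs : (Num.sqrt d)^-1 ^+ 2 * d = 1.
    by rewrite exprVn sqr_sqrtr ?mulVf ?gt_eqF // ltW.
  split; last by rewrite mxE mulr_gt0 // invr_gt0 sqrtr_gt0.
  rewrite dotvZr dotvZl mxE mulrA exprMn -expr2.
  have -> : dotv y y = 2 * y ord0 ord0 ^+ 2 - d by rewrite /d opprK addrC subrK.
  by move: hs; set c := _ ^+ 2 => hs; rewrite mulrBr -hs; ring.
Qed.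

(* Reversed Cauchy-Schwarz inequality for future timelike vectors of the
   Lorentz form  dotv x y - 2 x_0 y_0. *)
Lemma lorentz_timelike_lt0 x y :
  dotv x x - 2 * (x ord0 ord0) ^+ 2 < 0 -> 0 < x ord0 ord0 ->
  dotv y y - 2 * (y ord0 ord0) ^+ 2 < 0 -> 0 < y ord0 ord0 ->
  dotv x y < 2 * (x ord0 ord0 * y ord0 ord0).
Proof.
move=> xL x0 yL y0.
set l := y ord0 ord0 / x ord0 ord0.
have l0 : 0 < l by rewrite divr_gt0.
have lx : l * x ord0 ord0 = y ord0 ord0 by rewrite /l mulfVK // gt_eqF.
have := dotv_ge0 (l *: x - y).
rewrite dotvBl !dotvBr !dotvZl !dotvZr (dotvC y x).
set a := dotv x x in xL *; set b := dotv y y in yL *; set c := dotv x y.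
set u := x ord0 ord0 in x0 xL lx *; set v := y ord0 ord0 in y0 yL lx *.
move=> h; rewrite -(ltr_pM2l (mulr_gt0 (ltr0n _ 2) l0)).
have : l * (l * a) < l * (l * (2 * u ^+ 2)).
  by rewrite ltr_pM2l // ltr_pM2l // -subr_gt0; lra.
have -> : l * (l * (2 * u ^+ 2)) = 2 * v ^+ 2 by rewrite -lx; ring.
have -> : 2 * l * (2 * (u * v)) = 4 * v ^+ 2 by rewrite -lx; ring.
lra.
Qed.

Lemma model_coneD g x y :
  g <> Spherical -> model_cone g x -> model_cone g y -> model_cone g (x + y).
Proof.
case: g => //= _; first by move=> x0 y0; rewrite mxE addr_gt0.
move=> [xL x0] [yL y0]; have := lorentz_timelike_lt0 xL x0 yL y0.
rewrite !dotvDl !dotvDr (dotvC y x) mxE; split; last by rewrite addr_gt0.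
move: xL yL H; set a := dotv x x; set b := dotv y y; set c := dotv x y.
set u := x ord0 ord0; set v := y ord0 ord0 => xL yL hc.
have -> : a + c + (c + b) - 2 * (u + v) ^+ 2 =
   (a - 2 * u ^+ 2) + (b - 2 * v ^+ 2) + 2 * (c - 2 * (u * v)) by ring.
lra.
Qed.

Lemma model_coneZ g x c : 0 < c -> model_cone g x -> model_cone g (c *: x).
Proof.
case: g => /= c0; first by move=> x0; rewrite mxE mulr_gt0.
  by move=> x0; rewrite scaler_eq0 negb_or gt_eqF.
move=> [xL x0]; rewrite dotvZl dotvZr mxE; split; last by rewrite mulr_gt0.
have -> : c * (c * dotv x x) - 2 * (c * x ord0 ord0) ^+ 2 =
   c ^+ 2 * (dotv x x - 2 * x ord0 ord0 ^+ 2) by ring.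
by rewrite pmulr_rlt0 // exprn_gt0.
Qed.

(* On the sphere the cone is not convex, but the sum can only vanish when q lies
   in the span of X. *)
Lemma model_cone_comb g (X : n.-tuple V) q e :
  model g q -> (forall k : 'I_n, model g X`_k) -> q \notin <<X>>%VS -> 0 < e ->
  model_cone g (e *: q + \sum_(k < n) X`_k).
Proof.
move=> mq mX qX e0.
have SX : \sum_(k < n) X`_k \in <<X>>%VS.
  by apply: rpred_sum => k _; rewrite memv_span // mem_nth // size_tuple.
case: (pselect (g = Spherical)) => [gS|gS].
  rewrite gS /=; apply: contraNneq qX => /eqP; rewrite addr_eq0 => /eqP eq.
  by rewrite -[q](scalerK (lt0r_neq0 e0)) eq memvZ // memvN.
elim/big_rec: _ => [|k x _ h]; first by rewrite addr0; apply/model_coneZ/model_cone_model.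
by rewrite addrCA; apply: model_coneD gS (model_cone_model (mX k)) h.
Qed.

Lemma intX_scale_ball g A (y : V) r c :
  0 < r -> (forall z, dotv (z - y) (z - y) < r * r -> dual_cone A z) ->
  0 < c -> model g (c *: y) -> intX g (@model R g n `&` dual_cone A) (c *: y).
Proof.
move=> r0 Ar c0 my.
have Ay : dual_cone A y by apply: Ar; rewrite subrr dotv0r mulr_gt0.
split; first by split=> //; apply: dual_coneZ => //; exact: ltW.
exists (c * r); split=> [|z mz zy]; first by rewrite mulr_gt0.
have cn : c != 0 := lt0r_neq0 c0.
split=> //; rewrite -[z](scalerKV cn); apply: dual_coneZ; first exact: ltW.
apply: Ar; have -> : c^-1 *: z - y = c^-1 *: (z - c *: y) by rewrite scalerBr scalerK.
have ci0 : 0 < c^-1 * c^-1 by rewrite mulr_gt0 // invr_gt0.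
rewrite dotvZl dotvZr mulrA; rewrite -(ltr_pM2l ci0) in zy.
by apply: (lt_le_trans zy); rewrite le_eqVlt; apply/predU1l; field.
Qed.

End ModelCone.

Section Thick.
Variables (R : realType) (n : nat).
Local Notation V := 'rV[R]_n.+1.
Implicit Types (q v w : V).

Definition tangent (g : geometry) (q v : V) : Prop :=
  match g with
  | Euclidean => v ord0 ord0 = 0
  | Spherical => dotv q v = 0
  | Hyperbolic => dotv q v - 2 * (q ord0 ord0 * v ord0 ord0) = 0
  end.

Lemma tangent_decomp g q w : model g q -> exists ga v, tangent g q v /\ w = ga *: q + v.
Proof.
case: g => /= mq.
- exists (w ord0 ord0), (w - w ord0 ord0 *: q); split; last by rewrite addrC subrK.
  by rewrite !mxE mq mulr1 subrr.
- exists (dotv q w), (w - dotv q w *: q); split; last by rewrite addrC subrK.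
  by rewrite dotvBr dotvZr mq mulr1 subrr.
- case: mq => mq _; set ga := - (dotv q w - 2 * (q ord0 ord0 * w ord0 ord0)).
  exists ga, (w - ga *: q); split; last by rewrite addrC subrK.
  rewrite dotvBr dotvZr !mxE /ga.
  have -> : dotv q q = 2 * q ord0 ord0 ^+ 2 - 1 by lra.
  ring.
Qed.

Definition near_along (g : geometry) (q v : V) (e : R) : Prop :=
  exists al be, be != 0 /\ model g (al *: q + be *: v) /\
    dotv (al *: q + be *: v - q) (al *: q + be *: v - q) < e * e.

Lemma small_parameter (a K v0 q0 e : R) :
  0 < q0 -> 0 < e -> 0 <= K ->
  exists t, [/\ 0 < t, t <= 1, t ^+ 2 * `|a| <= 1 / 2, 12 * t * `|v0| < q0
              & 32 * t ^+ 2 * K < e ^+ 2].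
Proof.
move=> q00 e0 K0.
have a0 := normr_ge0 a; have v00 := normr_ge0 v0.
set t1 := 1 / (2 * (`|a| + 1)).
set t2 := q0 / (24 * (`|v0| + 1)).
set t3 := e / (6 * (K + 1)).
have t1p : 0 < t1 by rewrite /t1 divr_gt0 // mulr_gt0 //; lra.
have t2p : 0 < t2 by rewrite /t2 divr_gt0 // mulr_gt0 //; lra.
have t3p : 0 < t3 by rewrite /t3 divr_gt0 // mulr_gt0 //; lra.
set t := Num.min 1 (Num.min t1 (Num.min t2 t3)).
have tp : 0 < t by rewrite !lt_min t1p t2p t3p ltr01.
have /and4P [h1 h2 h3 h4] : [&& t <= 1, t <= t1, t <= t2 & t <= t3].
  by rewrite !ge_min !lexx !orbT.
exists t.
have e1 : t * (2 * (`|a| + 1)) <= 1 by rewrite -ler_pdivlMr // mulr_gt0 //; lra.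
have e2 : t * (24 * (`|v0| + 1)) <= q0 by rewrite -ler_pdivlMr // mulr_gt0 //; lra.
have e3 : t * (6 * (K + 1)) <= e by rewrite -ler_pdivlMr // mulr_gt0 //; lra.
split=> //; [nra|nra|].
have : (t * (6 * (K + 1))) ^+ 2 <= e ^+ 2 by rewrite lerXn2r // ?nnegrE //; nra.
nra.
Qed.

Lemma dist_comb_le (q v : V) al be t a :
  0 <= t -> t <= 1 ->
  (al - 1) ^+ 2 <= 16 * t ^+ 4 * a ^+ 2 -> be ^+ 2 <= 16 * t ^+ 2 ->
  dotv (al *: q + be *: v - q) (al *: q + be *: v - q) <=
  32 * t ^+ 2 * (a ^+ 2 * dotv q q + dotv v v).
Proof.
move=> t0 t1 ha hb.
have -> : al *: q + be *: v - q = (al - 1) *: q + be *: v.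
  by rewrite scalerBl scale1r addrAC.
have := dotv_ge0 ((al - 1) *: q - be *: v); rewrite -scaleNr !dotv_comb.
have q0 := dotv_ge0 q; have v0 := dotv_ge0 v.
have t42 : t ^+ 4 <= t ^+ 2.
  by rewrite -(mulr1 (t ^+ 2)) (exprD _ 2 2) ler_wpM2l ?exprn_ge0 // expr_le1.
have : (al - 1) ^+ 2 * dotv q q <= 16 * t ^+ 2 * a ^+ 2 * dotv q q.
  apply: ler_wpM2r => //; apply: (le_trans ha).
  by rewrite -mulrA -(mulrA 16) ler_wpM2l // ler_wpM2r // sqr_ge0.
have : be ^+ 2 * dotv v v <= 16 * t ^+ 2 * dotv v v by apply: ler_wpM2r.
nra.
Qed.

Lemma sqr_div_le (x d c : R) : 0 < c -> c <= d -> (x / d) ^+ 2 <= x ^+ 2 / c ^+ 2.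
Proof.
move=> c0 cd; have d0 : 0 < d by apply: lt_le_trans cd.
by rewrite expr_div_n ler_wpM2l ?sqr_ge0 // lef_pV2 ?posrE ?exprn_gt0 //; nra.
Qed.

Lemma euclidean_near_along q v e :
  model Euclidean q -> tangent Euclidean q v -> 0 < e -> near_along Euclidean q v e.
Proof.
rewrite /= => mq tq e0.
have [t [t0 t1 _ _ ht]] := @small_parameter 0 (dotv v v) 0 1 e ltr01 e0 (dotv_ge0 v).
exists 1, t; split; first by rewrite gt_eqF.
split; first by rewrite /= !mxE mq tq mulr0 mulr1 addr0.
apply: (le_lt_trans (dist_comb_le q v (ltW t0) t1 (a := 0) _ _)).
- by rewrite subrr expr0n /= mulr0.
- by rewrite ler_peMl ?sqr_ge0 //; lra.
- by rewrite expr0n /= mul0r add0r -expr2.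
Qed.

(* On the sphere and the hyperboloid the points come from the rational
   parametrisation t |-> ((1 -+ t^2 a) q + 2 t v) / (1 +- t^2 a) of the conic
   through q with tangent v. *)
Lemma spherical_near_along q v e :
  model Spherical q -> tangent Spherical q v -> 0 < e -> near_along Spherical q v e.
Proof.
rewrite /= => mq tq e0; set a := dotv v v.
have a0 : 0 <= a := dotv_ge0 v.
have [t [t0 t1 _ _ ht]] := @small_parameter a (a ^+ 2 * dotv q q + a) 0 1 e ltr01 e0
   (addr_ge0 (mulr_ge0 (sqr_ge0 _) (dotv_ge0 q)) a0).
have d1 : 1 <= 1 + t ^+ 2 * a by rewrite lerDl mulr_ge0 // sqr_ge0.
have d0 : 1 + t ^+ 2 * a != 0 by rewrite gt_eqF // (lt_le_trans ltr01 d1).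
exists ((1 - t ^+ 2 * a) / (1 + t ^+ 2 * a)), (2 * t / (1 + t ^+ 2 * a)).
split; first by rewrite mulf_neq0 ?invr_eq0 // mulf_neq0 // gt_eqF.
split; first by rewrite /= dotv_comb mq tq -/a; field.
apply: (le_lt_trans (dist_comb_le q v (ltW t0) t1 (a := a) _ _)); last by rewrite -expr2.
- have -> : (1 - t ^+ 2 * a) / (1 + t ^+ 2 * a) - 1 =
            - (2 * t ^+ 2 * a) / (1 + t ^+ 2 * a) by field.
  apply: (le_trans (sqr_div_le _ ltr01 d1)); rewrite expr1n divr1 sqrrN.
  have := sqr_ge0 (t ^+ 2 * a); nra.
- by apply: (le_trans (sqr_div_le _ ltr01 d1)); rewrite expr1n divr1; nra.
Qed.

Lemma hyperbolic_near_along q v e :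
  model Hyperbolic q -> tangent Hyperbolic q v -> 0 < e -> near_along Hyperbolic q v e.
Proof.
rewrite /= => -[mq q0] tq e0; set a := dotv v v - 2 * v ord0 ord0 ^+ 2.
have [t [t0 t1 ta tv ht]] := @small_parameter a (a ^+ 2 * dotv q q + dotv v v)
   (v ord0 ord0) (q ord0 ord0) e q0 e0
   (addr_ge0 (mulr_ge0 (sqr_ge0 _) (dotv_ge0 q)) (dotv_ge0 v)).
have /andP [ta1 ta2] : - (1 / 2) <= t ^+ 2 * a <= 1 / 2.
  by rewrite -ler_norml normrM ger0_norm ?sqr_ge0.
have d1 : 1 / 2 <= 1 - t ^+ 2 * a by lra.
have dp : 0 < 1 - t ^+ 2 * a by lra.
have d0 : 1 - t ^+ 2 * a != 0 by rewrite gt_eqF.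
have h0 : 0 < 1 / 2 :> R by lra.
exists ((1 + t ^+ 2 * a) / (1 - t ^+ 2 * a)), (2 * t / (1 - t ^+ 2 * a)).
split; first by rewrite mulf_neq0 ?invr_eq0 // mulf_neq0 // gt_eqF.
split; first split.
- rewrite dotv_comb !mxE.
  have -> : dotv q q = 2 * q ord0 ord0 ^+ 2 - 1 by lra.
  have -> : dotv q v = 2 * (q ord0 ord0 * v ord0 ord0) by lra.
  have -> : dotv v v = a + 2 * v ord0 ord0 ^+ 2 by rewrite /a; ring.
  by field.
- rewrite !mxE; set al := _ / _; set be := _ / _.
  have hal : 1 / 3 <= al by rewrite /al ler_pdivlMr //; lra.
  have hbe : `|be| <= 4 * t.
    rewrite ger0_norm /be; last by rewrite divr_ge0 // ?mulr_ge0 // ltW.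
    by rewrite ler_pdivrMr //; nra.
  have : `|be * v ord0 ord0| <= 4 * t * `|v ord0 ord0|.
    by rewrite normrM; apply: ler_wpM2r.
  have := ler_norm (- (be * v ord0 ord0)); rewrite normrN.
  have : al * q ord0 ord0 >= 1 / 3 * q ord0 ord0 by apply: ler_wpM2r => //; exact: ltW.
  lra.
- apply: (le_lt_trans (dist_comb_le q v (ltW t0) t1 (a := a) _ _)); last by rewrite -expr2.
  + have -> : (1 + t ^+ 2 * a) / (1 - t ^+ 2 * a) - 1 =
              (2 * t ^+ 2 * a) / (1 - t ^+ 2 * a) by field.
    apply: (le_trans (sqr_div_le _ h0 d1)); by rewrite le_eqVlt; apply/predU1l; field.
  + apply: (le_trans (sqr_div_le _ h0 d1)); by rewrite le_eqVlt; apply/predU1l; field.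
Qed.

Lemma model_near_along g q v e : model g q -> tangent g q v -> 0 < e -> near_along g q v e.
Proof.
case: g; [exact: euclidean_near_along|exact: spherical_near_along|].
exact: hyperbolic_near_along.
Qed.

(* Every tangent direction at an interior point of P is reached by a point of P. *)
Lemma thick_vspace_full g (P : set V) (W : {vspace V}) :
  P `<=` @model R g n -> thick g P -> (forall x, P x -> x \in W) -> (fullv <= W)%VS.
Proof.
move=> Pm [q [Pq [e [e0 qe]]]] PW; apply/subvP => w _.
have [ga [v [tv ->]]] := tangent_decomp w (Pm q Pq).
have [al [be [be0 [mp pe]]]] := model_near_along (Pm q Pq) tv e0.
have qW := PW _ Pq.
have : be *: v \in W.
  have -> : be *: v = (al *: q + be *: v) - al *: q by rewrite addrC addKr.
  by rewrite memvB ?memvZ //; apply: PW; apply: qe.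
by move=> /(memvZ be^-1); rewrite scalerK // => vW; rewrite memvD ?memvZ.
Qed.

Lemma thick_notin_hyperplane g (P : set V) (U : {vspace V}) :
  P `<=` @model R g n -> thick g P -> \dim U = n -> exists q, P q /\ q \notin U.
Proof.
move=> Pm thP dU; apply: contrapT => noq.
have PU x : P x -> x \in U by move=> Px; apply/negPn/negP => xU; apply: noq; exists x.
by have /dimvS := thick_vspace_full Pm thP PU; rewrite dim_rV dU ltnn.
Qed.

End Thick.

Section Tiles.
Variables (R : realType) (g : geometry) (n : nat) (T : set (set 'rV[R]_n.+1)).
Local Notation V := 'rV[R]_n.+1.
Hypothesis tessT : partial_tessellation g T.

Lemma tile_dual_cone P : T P -> exists A, P = @model R g n `&` dual_cone A /\ thick g P.
Proof. by move=> TP; have [[A [_ [_ [PA _]]]] thP] := tessT.1 P TP; exists A. Qed.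

Lemma tile_notin_hyperplane P (U : {vspace V}) :
  T P -> \dim U = n -> exists q, P q /\ q \notin U.
Proof.
move=> TP; have [A [-> thP]] := tile_dual_cone TP.
by apply: thick_notin_hyperplane thP => x [].
Qed.

Lemma tile_interiors_meet A1 A2 (X : n.-tuple V) q1 q2 d u :
  free X -> (forall k : 'I_n, model g X`_k) ->
  (forall k : 'I_n, dual_cone A1 X`_k) -> (forall k : 'I_n, dual_cone A2 X`_k) ->
  model g q1 -> dual_cone A1 q1 -> q1 \notin <<X>>%VS ->
  dual_cone A2 q2 -> q2 \notin <<X>>%VS ->
  0 < d -> u \in <<X>>%VS -> q1 = d *: q2 + u ->
  exists p, intX g (@model R g n `&` dual_cone A1) p /\ intX g (@model R g n `&` dual_cone A2) p.
Proof.
move=> fX mX A1X A2X mq1 A1q1 q1X A2q2 q2X d0 uX q1E.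
set w := coord X ^~ u.
set m := 1 + \sum_k `|w k|.
set e := m^-1.
have m0 : 0 < m by rewrite ltr_pwDl // sumr_ge0.
have e0 : 0 < e by rewrite invr_gt0.
have ew k : 0 < 1 + e * w k.
  have : e * `|w k| < 1.
    rewrite -(mulVf (lt0r_neq0 m0)) ltr_pM2l // ltr_pwDl // (bigD1 k) //= lerDl.
    exact: sumr_ge0.
  have := ler_norm (- w k); rewrite normrN; nra.
have fq1 : free (q1 :: X) by rewrite free_cons q1X fX.
have fq2 : free (q2 :: X) by rewrite free_cons q2X fX.
set y := e *: q1 + \sum_(k < n) X`_k.
have y1 : y = e *: q1 + \sum_(k < n) (fun=> 1) k *: X`_k.
  by congr (_ + _); apply: eq_bigr => k _; rewrite scale1r.
have y2 : y = (e * d) *: q2 + \sum_(k < n) (1 + e * w k) *: X`_k.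
  rewrite /y q1E [in LHS](coord_span uX) scalerDr scaler_sumr scalerA -addrA.
  by congr (_ + _); rewrite -big_split; apply: eq_bigr => k _; rewrite scalerA addrC scalerDl scale1r.
have [r1 [r1p r1A]] := dual_cone_cons_interior fq1 A1q1 A1X e0 (fun=> ltr01) y1.
have [r2 [r2p r2A]] := dual_cone_cons_interior fq2 A2q2 A2X (mulr_gt0 e0 d0) ew y2.
have [c [c0 mc]] := model_cone_normalize (model_cone_comb mq1 mX q1X e0 : model_cone g y).
by exists (c *: y); split; [exact: intX_scale_ball r1p r1A c0 mc|exact: intX_scale_ball r2p r2A c0 mc].
Qed.

Lemma same_side_tiles_eq (S : set V) (X : n.-tuple V) Pa Pb qa qb d u :
  T Pa -> T Pb -> free X -> (forall k : 'I_n, S X`_k) -> S `<=` Pa -> S `<=` Pb ->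
  Pa qa -> qa \notin <<X>>%VS -> Pb qb -> qb \notin <<X>>%VS ->
  0 < d -> u \in <<X>>%VS -> qa = d *: qb + u -> Pa = Pb.
Proof.
move=> Ta Tb fX XS SPa SPb Paq qaX Pbq qbX d0 uX qaE; apply: contrapT => nab.
have disj := tessT.2 _ _ Ta Tb nab.
have [Aa [Pa_eq _]] := tile_dual_cone Ta; have [Ab [Pb_eq _]] := tile_dual_cone Tb.
have Xa (k : 'I_n) : Pa X`_k by apply: SPa.
have Xb (k : 'I_n) : Pb X`_k by apply: SPb.
move: Paq Pbq Xa Xb disj; rewrite Pa_eq Pb_eq => -[mqa Aqa] [_ Aqb] Xa Xb disj.
have [p pab] := tile_interiors_meet fX (fun k => (Xa k).1) (fun k => (Xa k).2)
  (fun k => (Xb k).2) mqa Aqa qaX Aqb qbX d0 uX qaE.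
by have : set0 p by rewrite -disj.
Qed.

(* Of three points off the hyperplane spanned by X, two lie on the same side. *)
Lemma side_at_most_two_tiles (S : set V) (X : n.-tuple V) P1 P2 P3 :
  T P1 -> T P2 -> T P3 -> P1 <> P2 ->
  free X -> (forall k : 'I_n, S X`_k) -> S `<=` P1 -> S `<=` P2 -> S `<=` P3 ->
  P3 = P1 \/ P3 = P2.
Proof.
move=> T1 T2 T3 n12 fX XS S1 S2 S3.
have dX : \dim <<X>>%VS = n by rewrite (eqnP fX) size_tuple.
have [q1 [P1q q1X]] := tile_notin_hyperplane T1 dX.
have [q2 [P2q q2X]] := tile_notin_hyperplane T2 dX.
have [q3 [P3q q3X]] := tile_notin_hyperplane T3 dX.
have fq1 : free (q1 :: X) by rewrite free_cons q1X fX.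
have [d2 [u2 [u2X q2E]]] := free_cons_decomp q2 fq1.
have [d3 [u3 [u3X q3E]]] := free_cons_decomp q3 fq1.
have d_neq0 d u q : u \in <<X>>%VS -> q \notin <<X>>%VS -> q = d *: q1 + u -> d != 0.
  by move=> uX qX qE; apply: contraNneq qX => d0; rewrite qE d0 scale0r add0r.
have [d2p|d2n|/eqP] := ltrgt0P d2; last by rewrite (negbTE (d_neq0 _ _ _ u2X q2X q2E)).
  by case: n12; symmetry; exact: same_side_tiles_eq T2 T1 fX XS S2 S1 P2q q2X P1q q1X d2p u2X q2E.
have [d3p|d3n|/eqP] := ltrgt0P d3; last by rewrite (negbTE (d_neq0 _ _ _ u3X q3X q3E)).
  by left; apply: same_side_tiles_eq T3 T1 fX XS S3 S1 P3q q3X P1q q1X d3p u3X q3E.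
right; symmetry; apply: (same_side_tiles_eq T2 T3 fX XS S2 S3 P2q q2X P3q q3X
  (d := d2 / d3) (u := u2 - (d2 / d3) *: u3)).
- by rewrite -mulrNN -invrN divr_gt0 // oppr_gt0.
- by rewrite memvB // memvZ.
- by rewrite q2E q3E scalerDr scalerA mulfVK ?lt_eqF // addrACA subrr addr0.
Qed.

End Tiles.

Theorem proposition4p4 (R : realType) (g : geometry) (n : nat)
    (T : set (set 'rV[R]_(n.+1))) :
  partial_tessellation g T -> locally_finite g T ->
  forall S, side g T S ->
  exists T1 T2, T T1 /\ T T2 /\ T1 <> T2 /\ S `<=` T1 /\ S `<=` T2 /\
    (forall P, T P -> S `<=` P -> P = T1 \/ P = T2) /\
    S = T1 `&` T2.
Proof.
move=> tessT _ S [[[F [FT [[P1 FP1] SF]]] _] codS].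
have [X [fX [XS SX]]] := codim1_free_tuple codS.
have SinF P : F P -> S `<=` P by move=> FP x; rewrite SF => /(_ P FP).
have [P2 [FP2 n12]] : exists P2, F P2 /\ P1 <> P2.
  have dX : \dim <<X>>%VS = n by rewrite (eqnP fX) size_tuple.
  have [q [P1q qX]] := tile_notin_hyperplane tessT (FT _ FP1) dX.
  apply: contrapT => noP2; move/negP: qX; apply; apply: SX; rewrite SF => P FP.
  by have <- : P1 = P by apply: contrapT => nP; apply: noP2; exists P.
have two P : T P -> S `<=` P -> P = P1 \/ P = P2.
  move=> TP SP; exact: (side_at_most_two_tiles tessT (FT _ FP1) (FT _ FP2) TP n12 fX XS
    (SinF _ FP1) (SinF _ FP2) SP).
exists P1, P2; do 6!(split; first by auto).
apply/seteqP; split=> [x Sx|x [x1 x2]]; first by split; apply: SinF.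
by rewrite SF => P FP; case: (two P (FT _ FP) (SinF _ FP)) => ->.
Qed.
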